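(* For every weak composition $a$, $\mathfrak{L}_a=\sum_{T\in\mathfrak{L}\mathrm{SSF}(a)}x^{\mathrm{wt}(T)}$.
   Context: Weak composition of length $n$: sequence of $n$ nonnegative integers. A local move replaces consecutive entries $(0,k)$ at positions $p,p+1$ by $(i,j)$, $i+j=k$, $i,j\ge0$; a fixed slide of $a$ is obtained from $a$ by a (possibly empty) sequence of such moves with $j>0$ required whenever $a_{p+1}\ne0$; $\mathfrak{L}_a=\sum x^b$ over the set of fixed slides $b$ of $a$. $D(a)$: $a_i$ left-justified boxes in row $i$, row 1 lowest; for a filling $T$, $\mathrm{wt}(T)_i$ is the number of entries $i$. Triples (rows $r<s$): Type A: $\gamma=(r,c),\alpha=(r,c+1),\beta=(s,c+1)$, $a_r\ge a_s$; Type B: $\gamma=(s,c),\alpha=(s,c+1),\beta=(r,c)$, $a_s>a_r$; inversion triple: $\beta>\gamma\ge\alpha$ or $\gamma\ge\alpha>\beta$. A semi-skyline filling: positive integer entries, rows weakly decreasing left to right, distinct column entries, all triples inversion triples. $\mathfrak{L}\mathrm{SSF}(a)$: semi-skyline fillings of $D(a)$ whose first-column entry in each nonempty row $i$ equals $i$ and such that whenever box $B$ is in a higher row than box $B'$, the entry of $B$ is strictly larger than that of $B'$. *)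

From HB Require Import structures.
From mathcomp Require Import all_boot all_order all_algebra.
From mathcomp Require Import mpoly.
Set Implicit Arguments. Unset Strict Implicit. Unset Printing Implicit Defensive.
Import GRing.Theory.

(* Rows/positions are 0-indexed: row r (0 <= r < n) of the paper-row r+1.
   Columns are 0-indexed: column c is paper-column c+1.
   The variable x_(i+1) of the paper is 'X_i (i : 'I_n). *)

Definition local_move (a c c' : seq nat) : bool :=
  (size c' == size c) &&
  [exists p : 'I_(size c),
     [&& p.+1 < size c,
         nth 0 c p == 0,
         nth 0 c' p + nth 0 c' p.+1 == nth 0 c p.+1,
         (nth 0 a p.+1 != 0) ==> (0 < nth 0 c' p.+1) &
         [forall q : 'I_(size c),
            ((q : nat) != p) && ((q : nat) != p.+1) ==> (nth 0 c' q == nth 0 c q)]]].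

(* Finite state space containing all fixed slides of a: moves preserve the
   length and the sum, so every entry is <= sumn a. *)
Definition slide_state (a : seq nat) := ((size a).-tuple 'I_(sumn a).+1)%type.

Definition st_seq (a : seq nat) (t : slide_state a) : seq nat := map val t.

Definition start_state (a : seq nat) : slide_state a :=
  [tuple inord (nth 0 a i) | i < size a].

Definition is_fixed_slide (a : seq nat) (t : slide_state a) : bool :=
  connect [rel u v : slide_state a | local_move a (st_seq u) (st_seq v)]
          (start_state a) t.

Definition slide_mono (a : seq nat) (t : slide_state a) : 'X_{1.. size a} :=
  [multinom (val (tnth t i)) | i < size a].

Definition Lpoly (a : seq nat) : {mpoly int[size a]} :=
  \sum_(t : slide_state a | is_fixed_slide t) 'X_[slide_mono t].

(* A filling of D(a) is encoded as a function on 'I_n * 'I_(sumn a)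
   (every box (r,c) of D(a) has c < a_r <= sumn a) with values in
   {0,...,n}; value 0 marks "no box" (entries of a filling are positive).
   Entries of LSSF fillings are automatically <= n. *)
Definition filling (a : seq nat) :=
  {ffun 'I_(size a) * 'I_(sumn a) -> 'I_(size a).+1}.

Definition inD (a : seq nat) (r c : nat) : bool := (r < size a) && (c < nth 0 a r).

(* entry of T at (r, c); 0 outside the index range *)
Definition ent (a : seq nat) (T : filling a) (r c : nat) : nat :=
  match (insub r : option 'I_(size a)), (insub c : option 'I_(sumn a)) with
  | Some r', Some c' => val (T (r', c'))
  | _, _ => 0
  end.

Definition inv_triple (g al b : nat) : bool :=
  ((g < b) && (al <= g)) || ((al <= g) && (b < al)).

Definition is_semi_skyline (a : seq nat) (T : filling a) : bool :=
  [forall r : 'I_(size a), forall c : 'I_(sumn a),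
     inD a r c == (0 < ent T r c)] &&
  [forall r : 'I_(size a), forall c : 'I_(sumn a), forall d : 'I_(sumn a),
     ((c < d) && inD a r d) ==> (ent T r d <= ent T r c)] &&
  [forall r : 'I_(size a), forall s : 'I_(size a), forall c : 'I_(sumn a),
     [&& r != s, inD a r c & inD a s c] ==> (ent T r c != ent T s c)] &&
  (* Type A triples: rows r < s, a_r >= a_s,
     gamma = (r,c), alpha = (r,c+1), beta = (s,c+1) *)
  [forall r : 'I_(size a), forall s : 'I_(size a), forall c : 'I_(sumn a),
     [&& r < s, nth 0 a s <= nth 0 a r, inD a r c, inD a r c.+1 & inD a s c.+1]
       ==> inv_triple (ent T r c) (ent T r c.+1) (ent T s c.+1)] &&
  (* Type B triples: rows r < s, a_s > a_r,
     gamma = (s,c), alpha = (s,c+1), beta = (r,c) *)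
  [forall r : 'I_(size a), forall s : 'I_(size a), forall c : 'I_(sumn a),
     [&& r < s, nth 0 a r < nth 0 a s, inD a s c, inD a s c.+1 & inD a r c]
       ==> inv_triple (ent T s c) (ent T s c.+1) (ent T r c)].

Definition is_LSSF (a : seq nat) (T : filling a) : bool :=
  is_semi_skyline T &&
  [forall r : 'I_(size a), (0 < nth 0 a r) ==> (ent T r 0 == r.+1)] &&
  [forall r : 'I_(size a), forall s : 'I_(size a),
   forall c : 'I_(sumn a), forall d : 'I_(sumn a),
     [&& r < s, inD a r c & inD a s d] ==> (ent T r c < ent T s d)].

Definition wt (a : seq nat) (T : filling a) : 'X_{1.. size a} :=
  [multinom #|[pred x | val (T x) == i.+1]| | i < size a].

From HB Require Import structures.
From mathcomp Require Import all_boot all_order all_algebra.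
From mathcomp Require Import mpoly.
From mathcomp Require Import zify.
Import GRing.Theory.
Set Implicit Arguments. Unset Strict Implicit. Unset Printing Implicit Defensive.

(* A weak composition b is a fixed slide of a iff it has the length and sum of
   a and, at every k with a_k <> 0, b_k > 0 and the prefix sums of b and a agree
   up to k.  Local moves preserve this; conversely every other such b arises by
   a local move from another such b' whose total of prefix sums is smaller, so
   induction on that total reaches a.

   In an LSSF filling the rows weakly decrease and each entry is smaller than
   every entry of a higher row; these two conditions already force distinct
   column entries and all inversion triples.  Reading the rows from bottom to
   top, each from right to left, therefore gives the weakly increasing word
   with wt(T)_i letters i, so T is determined by wt(T), and the first-column
   condition translates exactly into the prefix-sum condition on wt(T).  Hence
   T |-> wt(T) is a bijection from LSSF(a) onto the fixed slides of a. *)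

Section SortedCount.

Variable s : seq nat.
Hypothesis s_sorted : sorted leq s.

Lemma sorted_nth_leq i j : i <= j -> j < size s -> nth 0 s i <= nth 0 s j.
Proof.
move=> ij js; apply: (sorted_leq_nth leq_trans leqnn 0 s_sorted) => //.
by rewrite inE (leq_ltn_trans ij js).
Qed.

Lemma sorted_ltn_count k j :
  j < size s -> nth 0 s j <= k -> j < count (fun v => v <= k) s.
Proof.
move=> js sjk; rewrite -(cat_take_drop j.+1 s) count_cat.
have /eqP -> : count (fun v => v <= k) (take j.+1 s) == size (take j.+1 s).
  rewrite -all_count; apply/(all_nthP 0) => i; rewrite size_takel // => ij.
  by rewrite nth_take // (leq_trans (sorted_nth_leq (ij : i <= j) js) sjk).
by rewrite size_takel // leq_addr.
Qed.

Lemma sorted_count_leq k j : k < nth 0 s j -> count (fun v => v <= k) s <= j.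
Proof.
move=> ksj; have [js|sj] := ltnP j (size s); last exact: leq_trans (count_size _ _) sj.
rewrite -(cat_take_drop j s) count_cat.
have /eqP -> : count (fun v => v <= k) (drop j s) == 0.
  rewrite -leqn0 leqNgt -has_count; apply/negP => /(has_nthP 0) [i].
  rewrite size_drop nth_drop ltn_subRL => ijs; apply/negP; rewrite -ltnNge.
  exact: leq_trans ksj (sorted_nth_leq (leq_addr _ _) ijs).
by rewrite addn0 (leq_trans (count_size _ _)) // size_takel // ltnW.
Qed.

Lemma sorted_nth_leq_count k j : j < count (fun v => v <= k) s -> nth 0 s j <= k.
Proof. by apply: contraTT; rewrite -!ltnNge => /sorted_count_leq. Qed.

Lemma sorted_nth_gt_count k j :
  count (fun v => v <= k) s <= j -> j < size s -> k < nth 0 s j.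
Proof.
move=> cj js; rewrite ltnNge; apply: contraTN cj => /(sorted_ltn_count js).
by rewrite -ltnNge.
Qed.

Lemma sorted_count_eq k m : m <= size s ->
  (0 < m -> nth 0 s m.-1 <= k) -> (m < size s -> k < nth 0 s m) ->
  count (fun v => v <= k) s = m.
Proof.
move=> ms lo hi; apply/eqP; rewrite eqn_leq; apply/andP; split.
  by case: ltngtP ms => // [/hi /sorted_count_leq|->] // _; apply: count_size.
by case: m ms lo {hi} => // m ms /(_ isT); apply: sorted_ltn_count.
Qed.

End SortedCount.

Lemma count_leqS (s : seq nat) v :
  count (fun x => x <= v.+1) s = count (fun x => x <= v) s + count_mem v.+1 s.
Proof.
rewrite -count_predUI addnC.
have /eq_count -> : predI (fun x => x <= v) (pred1 v.+1) =1 pred0.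
  by move=> x /=; case: eqP => [->|]; rewrite ?ltnn ?andbF.
by rewrite count_pred0 add0n; apply: eq_count => x /=; rewrite leq_eqVlt orbC ltnS.
Qed.

Lemma sorted_flatten_nseq (f : nat -> nat) (s : seq nat) :
  sorted ltn s -> sorted leq (flatten [seq nseq (f x) x | x <- s]).
Proof.
rewrite !sorted_pairwise //; [|exact: leq_trans|exact: ltn_trans].
elim: s => //= x s IHs /andP [xs /IHs {}IHs]; rewrite pairwise_cat IHs andbT.
apply/andP; split.
  apply/allrelP => y z /nseqP [-> _] /flattenP [_ /mapP [w ws ->] /nseqP [-> _]].
  by apply: ltnW; move/allP: xs; apply.
by elim: (f x) => //= n ->; rewrite andbT; apply/allP => y /nseqP [->].
Qed.

Definition psum (s : seq nat) k := sumn (take k s).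

Lemma psum0 s : psum s 0 = 0.
Proof. by rewrite /psum take0. Qed.

Lemma psumS s k : psum s k.+1 = psum s k + nth 0 s k.
Proof.
rewrite /psum; have [ks|sk] := ltnP k (size s).
  by rewrite (take_nth 0 ks) sumn_rcons.
by rewrite !take_oversize ?nth_default ?addn0 // ltnW.
Qed.

Lemma psum_oversize s k : size s <= k -> psum s k = sumn s.
Proof. by move=> sk; rewrite /psum take_oversize. Qed.

Lemma psum_mono s : {homo psum s : i j / i <= j}.
Proof.
move=> i j ij; rewrite -(subnKC ij); elim: (j - i) => [|d IH]; first by rewrite addn0.
by rewrite addnS psumS (leq_trans IH) ?leq_addr.
Qed.

Lemma psum_leq_sumn s k : psum s k <= sumn s.
Proof. by rewrite -(psum_oversize (leq_addl k (size s))) psum_mono ?leq_addr. Qed.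

Lemma nth_leq_sumn s i : nth 0 s i <= sumn s.
Proof. by rewrite (leq_trans _ (psum_leq_sumn s i.+1)) // psumS leq_addl. Qed.

Lemma nth_gt0_size (s : seq nat) i : 0 < nth 0 s i -> i < size s.
Proof. by move=> pos; rewrite ltnNge; apply: contraTN pos => si; rewrite nth_default. Qed.

Lemma psum_decompose s k : k < sumn s ->
  exists r j, [/\ r < size s, j < nth 0 s r & k = psum s r + j].
Proof.
move=> ks; exists (reshape_index s k), (reshape_offset s k); split.
- exact: reshape_indexP.
- exact: reshape_offsetP.
- by rewrite -{1}(reshape_indexK s k).
Qed.

Lemma sumn_map_iota (f : nat -> nat) n :
  sumn [seq f i | i <- iota 0 n] = \sum_(i < n) f i.
Proof. by rewrite sumnE big_map -(big_mkord xpredT f) /index_iota subn0. Qed.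

Lemma count_iota (P : pred nat) n : count P (iota 0 n) = \sum_(i < n) P i.
Proof. by rewrite -sumn_count sumn_map_iota. Qed.

(* Letter i occurs nth 0 b i.-1 times: b is indexed from 0, letters from 1. *)
Definition content_word (b : seq nat) : seq nat :=
  flatten [seq nseq (nth 0 b i.-1) i | i <- iota 1 (size b)].

Lemma content_word_rcons b x :
  content_word (rcons b x) = content_word b ++ nseq x (size b).+1.
Proof.
rewrite /content_word size_rcons -[in LHS](addn1 (size b)) iotaD map_cat flatten_cat.
rewrite /= cats0 add1n nth_rcons ltnn eqxx; congr (flatten _ ++ _); apply/eq_in_map => i.
by rewrite mem_iota nth_rcons => /andP [i0 ib]; rewrite prednK // -ltnS ib.
Qed.

Lemma sorted_content_word b : sorted leq (content_word b).
Proof. exact/sorted_flatten_nseq/iota_ltn_sorted. Qed.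

Lemma mem_content_word b x : x \in content_word b -> 0 < x <= size b.
Proof.
case/flattenP => w /mapP [i]; rewrite mem_iota add1n ltnS => /andP [i0 ib] ->.
by case/nseqP => -> _; rewrite i0.
Qed.

Lemma nth_content_word_leq b i : nth 0 (content_word b) i <= size b.
Proof.
have [/(mem_nth 0)/mem_content_word/andP [] //|wi] := ltnP i (size (content_word b)).
by rewrite nth_default.
Qed.

Lemma size_content_word b : size (content_word b) = sumn b.
Proof.
elim/last_ind: b => // b x IHb.
by rewrite content_word_rcons size_cat size_nseq IHb sumn_rcons.
Qed.

Lemma count_mem_content_word b v : count_mem v.+1 (content_word b) = nth 0 b v.
Proof.
elim/last_ind: b => [|b x IHb]; first by rewrite nth_nil.
rewrite content_word_rcons count_cat count_nseq IHb nth_rcons /= eqSS eq_sym.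
case: ltngtP => [vb|bv|->]; last by rewrite mul1n nth_default.
  by rewrite mul0n addn0.
by rewrite nth_default ?mul0n // ltnW.
Qed.

Lemma count_leq_content_word b k :
  count (fun v => v <= k) (content_word b) = psum b k.
Proof.
elim: k => [|k IHk].
  rewrite psum0; apply/eqP; rewrite -leqn0 leqNgt -has_count.
  by apply/hasP => -[x /mem_content_word]; rewrite leqn0 => /andP [/lt0n_neq0/negbTE ->].
by rewrite count_leqS IHk count_mem_content_word psumS.
Qed.

(** * Fixed slides *)

Definition slide_spec (a b : seq nat) : Prop :=
  [/\ size b = size a, sumn b = sumn a &
      forall k, nth 0 a k != 0 -> psum b k.+1 = psum a k.+1 /\ 0 < nth 0 b k].

Definition shifted_at (p : nat) (c c' : seq nat) : Prop :=
  [/\ size c' = size c,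
      forall q, q != p -> q != p.+1 -> nth 0 c' q = nth 0 c q &
      nth 0 c' p + nth 0 c' p.+1 = nth 0 c p + nth 0 c p.+1].

Lemma shifted_atC p c c' : shifted_at p c c' -> shifted_at p c' c.
Proof. by case=> sz eq_q eq_p; split=> // q qp qp1; rewrite eq_q. Qed.

Lemma local_moveP a c c' :
  reflect (exists p, [/\ p.+1 < size c, nth 0 c p = 0, shifted_at p c c'
                       & nth 0 a p.+1 != 0 -> 0 < nth 0 c' p.+1])
          (local_move a c c').
Proof.
apply: (iffP andP) => [[/eqP sz /existsP [p]]|[p [pc cp0 [sz eq_q eq_p] pos]]].
  case/and5P => pc /eqP cp0 /eqP eq_p /implyP pos /forallP eq_q.
  exists p; split=> //; split=> //; last by rewrite cp0.
  move=> q qp qp1; have [qc|cq] := ltnP q (size c); last by rewrite !nth_default ?sz.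
  by apply/eqP; have /implyP := eq_q (Ordinal qc); apply; rewrite qp qp1.
split; first by rewrite sz.
apply/existsP; exists (Ordinal (ltnW pc)); rewrite /= pc cp0 eqxx eq_p cp0 /=.
apply/and3P; split=> //; first exact/implyP.
by apply/forallP => q; apply/implyP => /andP [qp qp1]; rewrite eq_q.
Qed.

Lemma psum_shifted p c c' : shifted_at p c c' ->
  forall k, k != p.+1 -> psum c' k = psum c k.
Proof.
case=> _ eq_q eq_p; elim/ltn_ind => -[|k] IH kp; first by rewrite !psum0.
have [ek|kp1] := eqVneq k p.+1.
  by rewrite ek !psumS -!addnA eq_p IH // ?ek // neq_ltn ltnSn.
by rewrite !psumS IH // eq_q // -(inj_eq succn_inj).
Qed.

Lemma slide_spec_shifted a c c' p :
  slide_spec a c -> shifted_at p c c' -> p.+1 < size c -> nth 0 a p = 0 ->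
  (nth 0 a p.+1 != 0 -> 0 < nth 0 c' p.+1) -> slide_spec a c'.
Proof.
move=> [sz sum spec] sh pc ap pos; have psum_eq := psum_shifted sh.
have [sz' eq_q _] := sh; split; first by rewrite sz'.
  by rewrite -(psum_oversize (leqnn _)) sz' psum_eq ?psum_oversize // neq_ltn pc orbT.
move=> k ak; have [psk ck] := spec k ak.
have kp : k != p by apply: contraNneq ak => ->; rewrite ap.
split; first by rewrite psum_eq.
by have [ek|kp1] := eqVneq k p.+1; [rewrite ek pos -?ek | rewrite eq_q].
Qed.

Lemma slide_spec_refl a : slide_spec a a.
Proof. by split=> // k; rewrite lt0n. Qed.

Lemma slide_spec_move a c c' : local_move a c c' -> slide_spec a c -> slide_spec a c'.
Proof.
case/local_moveP => p [pc cp0 sh pos] spec; apply: slide_spec_shifted sh pc _ pos => //.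
have [_ _ nz_pos] := spec.
by have [//|/nz_pos []] := eqVneq (nth 0 a p) 0; rewrite cp0.
Qed.

Lemma slide_spec_psum_leq a b k : slide_spec a b -> psum a k <= psum b k.
Proof.
case=> _ _ spec; elim: k => [|k IHk]; first by rewrite !psum0.
have [ak|/spec [-> //]] := eqVneq (nth 0 a k) 0.
by rewrite !psumS ak addn0 (leq_trans IHk) ?leq_addr.
Qed.

Lemma slide_spec_eq a b :
  slide_spec a b -> (forall q, nth 0 a q = 0 -> nth 0 b q = 0) -> b = a.
Proof.
case=> sz _ spec supp; have psum_eq k : psum b k = psum a k.
  elim: k => [|k IHk]; first by rewrite !psum0.
  have [ak|/spec [] //] := eqVneq (nth 0 a k) 0.
  by rewrite !psumS IHk ak supp.
apply: (@eq_from_nth _ 0) => [|i _]; first by rewrite sz.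
by apply/eqP; rewrite -(eqn_add2l (psum b i)) {2}psum_eq -!psumS psum_eq.
Qed.

Lemma slide_spec_displaced a b : slide_spec a b -> b <> a ->
  exists p, [/\ nth 0 a p = 0, 0 < nth 0 b p & p.+1 < size a].
Proof.
move=> spec ba; have [sz sum _] := spec.
have [p ap bp] : exists2 p, nth 0 a p = 0 & 0 < nth 0 b p.
  have [/hasP [p _ /andP [/eqP ap bp]]|/hasPn supp] :=
    boolP (has (fun p => (nth 0 a p == 0) && (0 < nth 0 b p)) (iota 0 (size b))).
    by exists p.
  case: ba; apply: slide_spec_eq spec _ => p ap; apply/eqP; rewrite -leqn0 leqNgt.
  have [pb|bp] := ltnP p (size b); last by rewrite nth_default.
  by move: (supp p); rewrite mem_iota pb ap eqxx => /(_ isT).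
exists p; split=> //; rewrite ltnNge; apply/negP => ap1.
have pa : p < size a by rewrite -sz; apply: nth_gt0_size.
have ea : size a = p.+1 by apply/eqP; rewrite eqn_leq ap1.
have := slide_spec_psum_leq p spec; rewrite leqNgt => /negP; apply.
have -> : psum a p = sumn a by rewrite -(psum_oversize (leqnn _)) ea psumS ap addn0.
by rewrite -sum -(psum_oversize (leqnn (size b))) sz ea psumS -addn1 leq_add2l.
Qed.

Definition unslide (b : seq nat) (p : nat) : seq nat :=
  set_nth 0 (set_nth 0 b p 0) p.+1 (nth 0 b p + nth 0 b p.+1).

Lemma nth_unslide b p q : nth 0 (unslide b p) q =
  if q == p.+1 then nth 0 b p + nth 0 b p.+1 else if q == p then 0 else nth 0 b q.
Proof. by rewrite /unslide nth_set_nth /= nth_set_nth. Qed.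

Lemma size_unslide b p : p.+1 < size b -> size (unslide b p) = size b.
Proof. by move=> pb; rewrite !size_set_nth !(maxn_idPr _) // ltnW. Qed.

Lemma unslide_shifted b p : p.+1 < size b -> shifted_at p b (unslide b p).
Proof.
move=> pb; split; first exact: size_unslide.
  by move=> q qp qp1; rewrite nth_unslide (negbTE qp) (negbTE qp1).
by rewrite !nth_unslide eqxx (ltn_eqF (ltnSn p)) eqxx add0n.
Qed.

Definition slide_potential (s : seq nat) : nat := \sum_(k < (size s).+1) psum s k.

Lemma slide_potential_unslide b p : p.+1 < size b -> 0 < nth 0 b p ->
  slide_potential (unslide b p) < slide_potential b.
Proof.
move=> pb bp; have psum_eq := psum_shifted (unslide_shifted pb).
have pS : p.+1 < (size b).+1 by rewrite ltnS ltnW.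
rewrite /slide_potential size_unslide // (bigD1 (Ordinal pS)) //=.
rewrite [X in _ < X](bigD1 (Ordinal pS)) //=.
have -> : \sum_(k < (size b).+1 | k != Ordinal pS) psum (unslide b p) k =
          \sum_(k < (size b).+1 | k != Ordinal pS) psum b k.
  by apply: eq_bigr => k kp; rewrite psum_eq //; apply: contraNneq kp => /val_inj.
rewrite ltn_add2r !psumS psum_eq ?(ltn_eqF (ltnSn p)) // nth_unslide.
by rewrite (ltn_eqF (ltnSn p)) eqxx addn0 -{1}(addn0 (psum b p)) ltn_add2l.
Qed.

Lemma slide_spec_step a b : slide_spec a b -> b <> a ->
  exists b', [/\ slide_spec a b', local_move a b' b
               & slide_potential b' < slide_potential b].
Proof.
move=> spec ba; have [p [ap bp pa]] := slide_spec_displaced spec ba.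
have [sz _ nz_pos] := spec; have pb : p.+1 < size b by rewrite sz.
exists (unslide b p); split; last exact: slide_potential_unslide.
  apply: slide_spec_shifted spec (unslide_shifted pb) pb ap _ => _.
  by rewrite nth_unslide eqxx (leq_trans bp) ?leq_addr.
apply/local_moveP; exists p; split.
- by rewrite size_unslide.
- by rewrite nth_unslide (ltn_eqF (ltnSn p)) eqxx.
- exact/shifted_atC/unslide_shifted.
- by move/nz_pos => [].
Qed.

Definition state_of (a b : seq nat) : slide_state a :=
  [tuple inord (nth 0 b i) | i < size a].

Lemma size_st_seq a (t : slide_state a) : size (st_seq t) = size a.
Proof. by rewrite size_map size_tuple. Qed.

Lemma nth_st_seq a (t : slide_state a) (i : 'I_(size a)) : nth 0 (st_seq t) i = tnth t i.
Proof. by rewrite (nth_map ord0) ?size_tuple // -tnth_nth. Qed.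

Lemma st_seqK a : cancel (@st_seq a) (state_of a).
Proof.
move=> t; apply: eq_from_tnth => i.
by rewrite tnth_mktuple nth_st_seq; apply: val_inj; rewrite /= inordK.
Qed.

Lemma state_ofK a b : size b = size a -> (forall i, nth 0 b i <= sumn a) ->
  st_seq (state_of a b) = b.
Proof.
move=> sz bound; apply: (@eq_from_nth _ 0) => [|i]; first by rewrite size_st_seq sz.
rewrite size_st_seq => ia; rewrite (nth_st_seq _ (Ordinal ia)) tnth_mktuple.
by rewrite inordK // ltnS.
Qed.

Lemma st_seq_start a : st_seq (start_state a) = a.
Proof. exact: state_ofK (erefl _) (nth_leq_sumn a). Qed.

Lemma state_of_slide_spec a b : slide_spec a b -> st_seq (state_of a b) = b.
Proof. by case=> sz sum _; apply: state_ofK => // i; rewrite -sum nth_leq_sumn. Qed.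

Lemma fixed_slideP a (t : slide_state a) :
  reflect (slide_spec a (st_seq t)) (is_fixed_slide t).
Proof.
apply: (iffP idP) => [/connectP [s] | spec].
  have : slide_spec a (st_seq (start_state a)).
    by rewrite st_seq_start; apply: slide_spec_refl.
  elim: s (start_state a) => [|u s IHs] v vspec /=; first by move=> _ ->.
  by case/andP => vu /IHs; apply; apply: slide_spec_move vu vspec.
have [n] := ubnP (slide_potential (st_seq t)); elim: n t spec => // n IHn t spec pot_t.
have [ta|/eqP ta] := eqVneq (st_seq t) a.
  by rewrite -(st_seqK t) ta; apply: connect0.
have [b [bspec bt pot_b]] := slide_spec_step spec ta.
have bK := state_of_slide_spec bspec.
apply: connect_trans (IHn (state_of a b) _ _) (connect1 _).
- by rewrite bK.
- by rewrite bK; apply: leq_trans pot_b pot_t.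
- by rewrite /= bK.
Qed.

(** * LSSF fillings *)

Section Fillings.

Variables (a : seq nat) (T : filling a).

Lemma ent_ord (r : 'I_(size a)) (c : 'I_(sumn a)) : ent T r c = val (T (r, c)).
Proof. by rewrite /ent !valK. Qed.

Lemma ent_in r c (ra : r < size a) (ca : c < sumn a) :
  ent T r c = val (T (Ordinal ra, Ordinal ca)).
Proof. exact: (ent_ord (Ordinal ra) (Ordinal ca)). Qed.

Lemma ent_out r c : ~~ ((r < size a) && (c < sumn a)) -> ent T r c = 0.
Proof.
rewrite /ent negb_and; case: insubP => [r' ra _|//]; case: insubP => [c' ca _|//].
by rewrite ra ca.
Qed.

Lemma ent_leq r c : ent T r c <= size a.
Proof.
have [/andP [ra ca]|out] := boolP ((r < size a) && (c < sumn a)); last by rewrite ent_out.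
by rewrite (ent_in ra ca) -ltnS ltn_ord.
Qed.

End Fillings.

Lemma inD_sumn a r c : inD a r c -> (r < size a) && (c < sumn a).
Proof. by case/andP => -> /leq_trans; apply; apply: nth_leq_sumn. Qed.

Definition lssf_spec a (T : filling a) : Prop :=
  [/\ forall r c, (0 < ent T r c) = inD a r c,
      forall r c d, c < d -> inD a r d -> ent T r d <= ent T r c,
      forall r, 0 < nth 0 a r -> ent T r 0 = r.+1 &
      forall r s c d, r < s -> inD a r c -> inD a s d -> ent T r c < ent T s d].

Lemma lssf_spec_semi_skyline a (T : filling a) : lssf_spec T -> is_semi_skyline T.
Proof.
case=> supp row_dec _ up_inc; rewrite /is_semi_skyline -!andbA; apply/and5P; split.
- by apply/forallP => r; apply/forallP => c; rewrite supp.
- apply/forallP => r; apply/forallP => c; apply/forallP => d.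
  by apply/implyP => /andP [cd rd]; apply: row_dec.
- apply/forallP => r; apply/forallP => s; apply/forallP => c.
  apply/implyP => /and3P [rs rc sc]; rewrite neq_ltn.
  have [lt_rs|lt_sr|/val_inj eq_rs] := ltngtP r s; last by rewrite eq_rs eqxx in rs.
    by rewrite up_inc.
  by rewrite (up_inc s r) ?orbT.
- apply/forallP => r; apply/forallP => s; apply/forallP => c.
  apply/implyP => /and5P [rs _ rc rc1 sc1].
  by rewrite /inv_triple up_inc // (row_dec r c c.+1).
- apply/forallP => r; apply/forallP => s; apply/forallP => c.
  apply/implyP => /and5P [rs _ sc sc1 rc].
  by rewrite /inv_triple (up_inc r s c c.+1) // (row_dec s c c.+1) ?orbT.
Qed.

Lemma LSSFP a (T : filling a) : reflect (lssf_spec T) (is_LSSF T).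
Proof.
apply: (iffP idP) => [|spec]; last first.
  have [_ _ first_col up_inc] := spec.
  apply/andP; split; first (apply/andP; split).
  - exact: lssf_spec_semi_skyline.
  - by apply/forallP => r; apply/implyP => /first_col ->.
  apply/forallP => r; apply/forallP => s; apply/forallP => c; apply/forallP => d.
  by apply/implyP => /and3P [rs rc sd]; apply: up_inc.
case/andP => /andP [sky /forallP first_col] /forallP up_inc.
case/andP: sky => /andP [/andP [/andP [/forallP supp /forallP row_dec] _] _] _.
split.
- move=> r c; have [/andP [ra ca]|out] := boolP ((r < size a) && (c < sumn a)).
    by have /forallP/(_ (Ordinal ca))/eqP <- := supp (Ordinal ra).
  by rewrite ent_out //; apply/esym; apply: contraNF out => /inD_sumn.
- move=> r c d cd /[dup] rd /inD_sumn /andP [ra da].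
  have ca : c < sumn a := ltn_trans cd da.
  have /forallP/(_ (Ordinal ca))/forallP/(_ (Ordinal da)) := row_dec (Ordinal ra).
  by rewrite /= cd rd => /implyP; apply.
- move=> r ar; have ra := nth_gt0_size ar.
  by have /implyP/(_ ar)/eqP := first_col (Ordinal ra).
- move=> r s c d rs rc sd; have /andP [ra ca] := inD_sumn rc.
  have /andP [sa da] := inD_sumn sd.
  have /forallP/(_ (Ordinal sa))/forallP/(_ (Ordinal ca))/forallP/(_ (Ordinal da)) :=
    up_inc (Ordinal ra).
  by rewrite /= rs rc sd => /implyP; apply.
Qed.

(** * Reading words and weights *)

Definition row_word a (T : filling a) r := [seq ent T r c | c <- iota 0 (nth 0 a r)].

Definition reading_word a (T : filling a) :=
  flatten [seq rev (row_word T r) | r <- iota 0 (size a)].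

Section ReadingWord.

Variables (a : seq nat) (T : filling a).

Lemma shape_reading_word : shape [seq rev (row_word T r) | r <- iota 0 (size a)] = a.
Proof.
rewrite /shape -map_comp -[RHS](mkseq_nth 0 a); apply: eq_map => r /=.
by rewrite size_rev size_map size_iota.
Qed.

Lemma size_reading_word : size (reading_word T) = sumn a.
Proof. by rewrite size_flatten shape_reading_word. Qed.

Lemma nth_reading_word r j : r < size a -> j < nth 0 a r ->
  nth 0 (reading_word T) (psum a r + j) = ent T r (nth 0 a r - j.+1).
Proof.
move=> ra ja; rewrite nth_flatten shape_reading_word.
rewrite (flatten_indexKl ja) (flatten_indexKr ja) (nth_map 0) ?size_iota // nth_iota //.
have jr : nth 0 a r - j.+1 < nth 0 a r by rewrite ltn_subLR // addSnnS leq_addl.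
by rewrite nth_rev size_map size_iota // (nth_map 0) ?size_iota // nth_iota.
Qed.

Hypothesis T_lssf : lssf_spec T.

Lemma sorted_reading_word : sorted leq (reading_word T).
Proof.
have [_ row_dec _ up_inc] := T_lssf.
apply/(sortedP 0) => k; rewrite size_reading_word => k1a.
have [r' [[|j'] [r'a j'r' ek1]]] := psum_decompose k1a; last first.
  have -> : k = psum a r' + j' by lia.
  rewrite -addnS !nth_reading_word ?(ltnW j'r') //; apply: row_dec; first by lia.
  by rewrite /inD r'a /=; lia.
have [r [j [ra jr ek]]] := psum_decompose (ltnW k1a).
have rr' : r < r' by rewrite ltnNge; apply/negP => /(psum_mono a); lia.
rewrite ek1 ek !nth_reading_word //; apply/ltnW/up_inc => //.
  all: by rewrite /inD ?ra ?r'a /=; lia.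
Qed.

Lemma mem_reading_word x : x \in reading_word T -> 0 < x <= size a.
Proof.
have [supp _ _ _] := T_lssf; case/(nthP 0) => k; rewrite size_reading_word => ka <-.
have [r [j [ra jr ->]]] := psum_decompose ka.
by rewrite nth_reading_word // ent_leq supp /inD ra /=; lia.
Qed.

Lemma card_entries_count v : 0 < v ->
  #|[pred x | val (T x) == v]| = count_mem v (reading_word T).
Proof.
move=> v0; have [supp _ _ _] := T_lssf.
have entry_sum : #|[pred x | val (T x) == v]| =
                 \sum_(r < size a) \sum_(c < sumn a) (ent T r c == v).
  rewrite -sum1_card big_mkcond pair_big /=; apply: eq_bigr => -[r c] _.
  by rewrite ent_ord inE; case: eqP.
rewrite entry_sum count_flatten -map_comp sumn_map_iota; apply: eq_bigr => r _ /=.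
rewrite count_rev count_map count_iota.
rewrite (big_ord_widen _ (fun c => (ent T r c == v) : nat) (nth_leq_sumn a r)).
rewrite [RHS]big_mkcond /=.
apply: eq_bigr => c _; case: ltnP => [//|ac].
by case: eqP => // ecv; move: (supp r c); rewrite ecv v0 /inD ltn_ord ltnNge ac.
Qed.

End ReadingWord.

Definition content a (T : filling a) : seq nat :=
  [seq #|[pred x | val (T x) == i.+1]| | i <- iota 0 (size a)].

Lemma size_content a (T : filling a) : size (content T) = size a.
Proof. by rewrite size_map size_iota. Qed.

Lemma nth_content a (T : filling a) i : i < size a ->
  nth 0 (content T) i = #|[pred x | val (T x) == i.+1]|.
Proof. by move=> ia; rewrite (nth_map 0) ?size_iota // nth_iota. Qed.

Lemma reading_word_content a (T : filling a) :
  lssf_spec T -> reading_word T = content_word (content T).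
Proof.
move=> spec; apply: (sorted_eq leq_trans anti_leq (sorted_reading_word spec)).
  exact: sorted_content_word.
apply/allP => -[|v] _ /=; apply/eqP.
  rewrite !(count_memPn _) //; apply/negP.
    by move/mem_content_word.
  by move/(mem_reading_word spec).
rewrite count_mem_content_word.
have [va|av] := ltnP v (size a); first by rewrite nth_content // card_entries_count.
rewrite nth_default ?size_content //; apply/count_memPn/negP.
by move/(mem_reading_word spec)/andP => [_]; rewrite ltnNge av.
Qed.

Lemma lssf_slide_spec a (T : filling a) : lssf_spec T -> slide_spec a (content T).
Proof.
move=> spec; have [supp _ first_col up_inc] := spec.
have word_eq := reading_word_content spec.
split; first exact: size_content.
  by rewrite -size_content_word -word_eq size_reading_word.
move=> k ak; have ka : k < size a by apply: nth_gt0_size; rewrite lt0n.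
have first_pos : nth 0 (reading_word T) (psum a k + (nth 0 a k).-1) = k.+1.
  by rewrite nth_reading_word ?prednK ?lt0n // subnn first_col // lt0n.
split.
  rewrite -count_leq_content_word -word_eq.
  apply: sorted_count_eq; first exact: sorted_reading_word.
  - by rewrite size_reading_word psum_leq_sumn.
  - by move=> _; rewrite psumS -[nth 0 a k]prednK ?lt0n // addnS /= first_pos.
  rewrite size_reading_word => /psum_decompose [r [j [ra jr e]]]; rewrite e.
  have kr : k < r.
    rewrite ltnNge; apply/negP => /(@psum_mono a r.+1 k.+1).
    by move: e; rewrite !psumS; lia.
  rewrite nth_reading_word // -{1}(first_col k _); last by rewrite lt0n.
  by apply: up_inc; rewrite // /inD ?ka ?ra ?lt0n //=; lia.
rewrite nth_content // card_entries_count // -has_count has_pred1 -first_pos mem_nth //.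
rewrite size_reading_word (leq_trans _ (psum_leq_sumn a k.+1)) //.
by rewrite psumS -addnS prednK ?lt0n.
Qed.

(* The filling whose reading word is content_word b: box (r, c) is read at
   position psum a r.+1 - c.+1. *)
Definition filling_of_content a (b : seq nat) : filling a :=
  [ffun x : 'I_(size a) * 'I_(sumn a) => if x.2 < nth 0 a x.1
             then inord (nth 0 (content_word b) (psum a x.1.+1 - x.2.+1)) else ord0].

Lemma ent_filling_of_content a b r c : size b = size a ->
  ent (filling_of_content a b) r c =
  if inD a r c then nth 0 (content_word b) (psum a r.+1 - c.+1) else 0.
Proof.
move=> sz; have [/andP [ra ca]|out] := boolP ((r < size a) && (c < sumn a)).
  rewrite (ent_in _ ra ca) ffunE /= /inD ra /=; case: ifP => // _.
  by rewrite inordK // ltnS -sz nth_content_word_leq.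
by rewrite ent_out //; case: ifP => // /inD_sumn rc; rewrite rc in out.
Qed.

Lemma lssf_content_eq a (T : filling a) :
  lssf_spec T -> T = filling_of_content a (content T).
Proof.
move=> spec; have [supp _ _ _] := spec.
apply/ffunP => -[r c]; rewrite ffunE /=; apply: val_inj; rewrite -ent_ord.
case: ltnP => [ca|ac].
  rewrite /= -(reading_word_content spec).
  have j_lt : nth 0 a r - c.+1 < nth 0 a r by lia.
  have -> : psum a r.+1 - c.+1 = psum a r + (nth 0 a r - c.+1) by rewrite psumS; lia.
  rewrite nth_reading_word // inordK; last by rewrite ltnS ent_leq.
  by congr ent; lia.
by apply/eqP; rewrite -leqn0 leqNgt supp /inD ltn_ord ltnNge ac.
Qed.

Lemma inD_psum a r c : inD a r c -> psum a r <= psum a r.+1 - c.+1 < psum a r.+1.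
Proof. by case/andP => _ ca; rewrite psumS; lia. Qed.

Section FillingOfContent.

Variables (a b : seq nat).
Hypothesis b_spec : slide_spec a b.

Let b_size : size b = size a.
Proof. by case: b_spec. Qed.

Let word_size : size (content_word b) = sumn a.
Proof. by case: b_spec => _ sum _; rewrite size_content_word. Qed.

(* Since psum b r.+1 = psum a r.+1 for a nonempty row r, the letters <= r.+1 of
   the content word are exactly its first psum a r.+1 letters. *)
Let count_word r : 0 < nth 0 a r ->
  count (fun v => v <= r.+1) (content_word b) = psum a r.+1.
Proof.
case: b_spec => _ _ spec ar; rewrite count_leq_content_word.
by have [] := spec r; rewrite -?lt0n.
Qed.

Let word_leq r j : 0 < nth 0 a r -> j < psum a r.+1 -> nth 0 (content_word b) j <= r.+1.
Proof.
move=> ar jr; apply: sorted_nth_leq_count; first exact: sorted_content_word.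
by rewrite count_word.
Qed.

Let word_gt r j : 0 < nth 0 a r -> psum a r.+1 <= j -> j < sumn a ->
  r.+1 < nth 0 (content_word b) j.
Proof.
move=> ar rj ja; apply: sorted_nth_gt_count; rewrite ?sorted_content_word //.
  by rewrite count_word.
by rewrite word_size.
Qed.

Lemma lssf_spec_filling_of_content : lssf_spec (filling_of_content a b).
Proof.
have ent_eq := ent_filling_of_content _ _ b_size.
have idx_lt r c : inD a r c -> psum a r.+1 - c.+1 < sumn a.
  by move/inD_psum/andP => [_ /leq_trans]; apply; apply: psum_leq_sumn.
have ar_pos r c : inD a r c -> 0 < nth 0 a r by case/andP => _; apply: leq_ltn_trans.
split.
- move=> r c; rewrite ent_eq; case: ifP => // rc.
  have := idx_lt r c rc; rewrite -word_size.
  by move=> /(mem_nth 0) /mem_content_word /andP [].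
- move=> r c d cd rd; have rc : inD a r c.
    by case/andP: rd => ra da; rewrite /inD ra (ltn_trans cd da).
  rewrite !ent_eq rd rc; apply: sorted_nth_leq; rewrite ?sorted_content_word //.
    by case/andP: rd => _ da; lia.
  by rewrite word_size idx_lt.
- move=> r ar; have r0 : inD a r 0 by rewrite /inD ar nth_gt0_size.
  rewrite ent_eq r0; apply/anti_leq/andP; split.
    by apply: word_leq; rewrite // ltn_subrL psumS addn_gt0 ar orbT.
  apply: sorted_nth_gt_count; rewrite ?sorted_content_word ?word_size ?idx_lt //.
  have [_ _ spec] := b_spec; have [psum_eq br] := spec r (lt0n_neq0 ar).
  by rewrite count_leq_content_word; move: psum_eq; rewrite !psumS; lia.
- move=> r s c d rs rc sd; rewrite !ent_eq rc sd.
  apply: leq_ltn_trans (word_leq (ar_pos _ _ rc) _) _.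
    by case/andP: (inD_psum rc).
  apply: word_gt (ar_pos _ _ rc) _ (idx_lt _ _ sd).
  by case/andP: (inD_psum sd) => + _; apply: leq_trans; apply: psum_mono.
Qed.

Lemma content_filling_of_content : content (filling_of_content a b) = b.
Proof.
have spec := lssf_spec_filling_of_content.
have word_eq : reading_word (filling_of_content a b) = content_word b.
  apply: (@eq_from_nth _ 0) => [|k]; first by rewrite size_reading_word word_size.
  rewrite size_reading_word => /psum_decompose [r [j [ra jr ->]]].
  rewrite nth_reading_word // ent_filling_of_content // /inD ra ifT /=; last by lia.
  by congr nth; rewrite psumS; lia.
apply: (@eq_from_nth _ 0) => [|i]; rewrite size_content ?b_size // => ia.
by rewrite nth_content // card_entries_count // word_eq count_mem_content_word.
Qed.

End FillingOfContent.

Lemma wt_content a (T : filling a) : wt T = [multinom nth 0 (content T) i | i < size a].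
Proof. by apply/mnmP => i; rewrite !multinomE !tnth_mktuple nth_content. Qed.

Lemma slide_mono_st_seq a (t : slide_state a) :
  slide_mono t = [multinom nth 0 (st_seq t) i | i < size a].
Proof. by apply/mnmP => i; rewrite !multinomE !tnth_mktuple nth_st_seq. Qed.

Local Open Scope ring_scope.

Theorem proposition4p11 (a : seq nat) :
  Lpoly a = \sum_(T : filling a | is_LSSF T) 'X_[wt T].
Proof.
pose to_filling (t : slide_state a) := filling_of_content a (st_seq t).
pose to_state (T : filling a) := state_of a (content T).
rewrite /Lpoly (reindex_onto to_filling to_state) => [|T /LSSFP spec]; last first.
  rewrite /to_filling state_of_slide_spec.
    exact/esym/lssf_content_eq.
  exact: lssf_slide_spec.
apply: eq_big => t.
  apply/fixed_slideP/andP => [spec|[/LSSFP spec /eqP et]].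
    split; first exact/LSSFP/lssf_spec_filling_of_content.
    by rewrite /to_state content_filling_of_content // st_seqK.
  by rewrite -et state_of_slide_spec; apply: lssf_slide_spec spec.
move/fixed_slideP => spec.
by rewrite wt_content slide_mono_st_seq content_filling_of_content.
Qed.
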